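(* Let $\tau$ be a nice vocabulary, $m,k\in\mathbb N$, and let $\mathfrak K$ be an $m$-ary $PW(k)$-class of $\tau$-structures. Then $\mathfrak K$ is $(m,0)$-constructible.
   Context: Vocabularies are finite and relational; a vocabulary is nice if every relation symbol has positive arity. $m$-ary $PW(k)$-class: for a nice $\tau$, a class $\mathfrak K$ of $\tau$-structures is an $m$-ary $PW(k)$-class if there are a vocabulary $\tau^+\supseteq\tau$ with $|\tau^+\setminus\tau|=k$ and every relation in $\tau^+\setminus\tau$ of arity at most $m$, and a finite set $\mathfrak P$ of $\tau^+$-structures, such that $\mathfrak K$ consists exactly of the $\tau$-reducts of structures in the closure of $\mathfrak P$ under: disjoint union; recoloring $\rho_{i\to j}$ (for unary auxiliary predicates, move all elements of $P_i$ to $P_j$); modifications $\delta_{R,B}$ (redefine a relation $R$ by a quantifier-free formula $B$ of $\tau^+$). A $k$-const structure is $(M,a_1,\dots,a_k)$ with $a_i\in|M|$. Addition operations $\mathfrak S_{\tau,k,k_1,k_2}$: an element $\mathbf s$ consists of sets $A_l\subseteq\{1,\dots,k_l\}$, injections $g_l:A_l\to\{1,\dots,k\}$ with disjoint images covering $\{1,\dots,k\}$, sets $B_l\subseteq\{1,\dots,k_l\}^2$, $B\subseteq\{1,\dots,k_1\}\times\{1,\dots,k_2\}$, and for each $R\in\tau$ of arity $n$ and $w_1,w_2\subseteq\{1,\dots,n\}$ a $\{\mathbb T,\mathbb F\}$-valued function $f_{R,w_1,w_2}$ on triples $(p,q_1,q_2)$ ($p$ a quantifier-free $n$-type in a vocabulary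 of $k_1+k_2$ constants and two unary predicates, $q_l$ a quantifier-free $\tau$-type in $(x_i)_{i\in w_l}$). For $k_l$-const $(M_l,\bar a^l)$ with $|M_1|\cap|M_2|\subseteq\{a^1_i\}\cap\{a^2_j\}$, $a^l_i=a^l_j\iff(i,j)\in B_l$, $a^1_i=a^2_j\iff(i,j)\in B$, the sum $M_1\circledast_{\mathbf s}M_2$ is the $k$-const structure with universe $(|M_1|\setminus\{a^1_i\})\cup(|M_2|\setminus\{a^2_i\})\cup\{a^l_i:i\in A_l\}$, constants $b_{g_l(i)}=a^l_i$, and $R(\bar x)$ given by $f_{R,w_1,w_2}(p,q_1,q_2)$ where $w_l=\{i:x_i\in|M_l|\}$, $p$ is the quantifier-free type of $\bar x$ over all constants $a^l_i$ and the predicates $|M_1|,|M_2|$, and $q_l$ the quantifier-free type of $(x_i)_{i\in w_l}$ in $M_l$. Empty structures $\mathrm{Null}_X$ are allowed. A class $\mathfrak K$ of $\tau$-structures is $(m^*,k^* )$-constructible if there are a finite relational $\tau^+\supseteq\tau$ with all relations in $\tau^+\setminus\tau$ of arity $\le m^*$, a finite set $\mathfrak P$ of $k$-const $\tau^+$-structures ($k\le k^*$), and a finite set $\mathfrak S$ of addition operations in $\mathfrak S_{\tau^+,k,k_1,k_2}$ with $k,k_1,k_2\le k^*$, such that $\mathfrak K$ is exactly the set of $\tau$-reducts of the closure of $\mathfrak P$ under $\mathfrak S$. *)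

(* Finite relational structures whose universes are finite
   subsets (given as sequences) of the ambient type nat, so that the
   set-theoretic conditions of the paper (disjointness, |M1| ∩ |M2| ⊆ constants)
   are meaningful. Classes are taken up to isomorphism (closure rules include
   isomorphic copies). *)
From mathcomp Require Import all_boot.
Set Implicit Arguments. Unset Strict Implicit. Unset Printing Implicit Defensive.

Record vocab := Vocab { sym : finType; ar : sym -> nat }.

Definition nice (v : vocab) : Prop := forall R : sym v, 0 < ar R.

Definition ext (v : vocab) (aux : finType) (arx : aux -> nat) : vocab :=
  @Vocab (sym v + aux)%type
    (fun s => match s with inl R => ar R | inr a => arx a end).
Arguments ext : clear implicits.

Record struc (v : vocab) := Struc {
  univ : seq nat;
  rel : sym v -> seq nat -> bool }.   (* interpretation, masked by [holds] *)

Definition holds (v : vocab) (M : struc v) (R : sym v) (xs : seq nat) : bool :=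
  [&& size xs == ar R, all (fun x => x \in univ M) xs & rel M R xs].

Definition iso (v : vocab) (M N : struc v) : Prop :=
  exists f : nat -> nat,
    {in univ M &, injective f} /\
    (forall y, y \in univ N <-> exists2 x, x \in univ M & f x = y) /\
    (forall R xs, all (fun x => x \in univ M) xs ->
       holds N R (map f xs) = holds M R xs).

Definition reduct (v : vocab) (aux : finType) (arx : aux -> nat)
  (N : struc (ext v aux arx)) : struc v :=
  @Struc v (univ N) (fun R xs => rel N (inl R) xs).

Inductive qf (v : vocab) :=
| QFalse
| QAtom of sym v & seq nat
| QEq of nat & nat
| QNeg of qf v
| QAnd of qf v & qf v.
Arguments QFalse {v}.

Fixpoint qf_eval (v : vocab) (M : struc v) (e : nat -> nat) (B : qf v) : bool :=
  match B with
  | QFalse => false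
  | QAtom R vs => holds M R (map e vs)
  | QEq i j => e i == e j
  | QNeg B1 => ~~ qf_eval M e B1
  | QAnd B1 B2 => qf_eval M e B1 && qf_eval M e B2
  end.

Fixpoint qf_scoped (v : vocab) (n : nat) (B : qf v) : bool :=
  match B with
  | QFalse => true
  | QAtom _ vs => all (fun i => i < n) vs
  | QEq i j => (i < n) && (j < n)
  | QNeg B1 => qf_scoped n B1
  | QAnd B1 B2 => qf_scoped n B1 && qf_scoped n B2
  end.

Definition disj_union (v : vocab) (M1 M2 : struc v) : struc v :=
  @Struc v (univ M1 ++ univ M2) (fun R xs => holds M1 R xs || holds M2 R xs).

Section Ext.
Variables (v : vocab) (aux : finType) (arx : aux -> nat).
Local Notation tp := (ext v aux arx).

Definition recolor (M : struc tp) (i j : aux) : struc tp :=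
  @Struc tp (univ M) (fun S xs =>
    if S == inr j then rel M (inr i) xs || rel M (inr j) xs
    else if S == inr i then false else rel M S xs).

Definition modify (M : struc tp) (R : sym tp) (B : qf tp) : struc tp :=
  @Struc tp (univ M) (fun S xs =>
    if S == R then qf_eval M (fun i => nth 0 xs i) B else rel M S xs).

Inductive pw_clos (nP : nat) (P : nat -> struc tp) : struc tp -> Prop :=
| pw_base i : i < nP -> pw_clos nP P (P i)
| pw_iso M N : pw_clos nP P M -> iso M N -> pw_clos nP P N
| pw_union M1 M2 : pw_clos nP P M1 -> pw_clos nP P M2 ->
    (forall x, x \in univ M1 -> x \notin univ M2) ->
    pw_clos nP P (disj_union M1 M2)
| pw_recolor M i j : arx i = 1 -> arx j = 1 -> pw_clos nP P M ->
    pw_clos nP P (recolor M i j)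
| pw_modify M R B : qf_scoped (ar R) B -> pw_clos nP P M ->
    pw_clos nP P (modify M R B).
End Ext.

Definition pw_class (v : vocab) (m k : nat) (K : struc v -> Prop) : Prop :=
  exists (aux : finType) (arx : aux -> nat),
    #|aux| = k /\ (forall a, arx a <= m) /\
    exists (nP : nat) (P : nat -> struc (ext v aux arx)),
      forall M, K M <-> exists N, pw_clos nP P N /\ M = reduct N.

Record kstruc (v : vocab) := KStruc { kS : struc v; kc : seq nat }.
(* k = size (kc M) *)

Definition kwf (v : vocab) (M : kstruc v) : Prop :=
  all (fun a => a \in univ (kS M)) (kc M).

Definition kiso (v : vocab) (M N : kstruc v) : Prop :=
  exists f : nat -> nat,
    {in univ (kS M) &, injective f} /\
    (forall y, y \in univ (kS N) <-> exists2 x, x \in univ (kS M) & f x = y) /\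
    (forall R xs, all (fun x => x \in univ (kS M)) xs ->
       holds (kS N) R (map f xs) = holds (kS M) R xs) /\
    map f (kc M) = kc N.

(* quantifier-free n-type of x_0..x_(n-1) over k1+k2 constants and two unary
   predicates U1 U2: the set of true atomic formulas.  Terms are indexed by
   'I_(n+k1+k2): first the variables, then the constants of M1, then of M2. *)
Definition patom (N : nat) : finType := (('I_N * 'I_N) + 'I_N + 'I_N)%type.
Definition ptype (n k1 k2 : nat) := {set patom (n + k1 + k2)}.

(* quantifier-free v-type of (x_i)_{i in w}: true atomic formulas among those
   variables (equalities and relation atoms); atoms mentioning a variable
   outside w are (canonically) absent. *)
Definition qatom (v : vocab) (n : nat) : finType :=
  (('I_n * 'I_n) + {R : sym v & (ar R).-tuple 'I_n})%type.
Definition qtype (v : vocab) (n : nat) := {set qatom v n}.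

Record addop (v : vocab) := AddOp {
  ao_k : nat; ao_k1 : nat; ao_k2 : nat;
  ao_A1 : {set 'I_ao_k1}; ao_A2 : {set 'I_ao_k2};
  ao_g1 : 'I_ao_k1 -> 'I_ao_k; ao_g2 : 'I_ao_k2 -> 'I_ao_k;
  ao_B1 : {set 'I_ao_k1 * 'I_ao_k1}; ao_B2 : {set 'I_ao_k2 * 'I_ao_k2};
  ao_B : {set 'I_ao_k1 * 'I_ao_k2};
  ao_f : forall R : sym v, {set 'I_(ar R)} -> {set 'I_(ar R)} ->
           ptype (ar R) ao_k1 ao_k2 -> qtype v (ar R) -> qtype v (ar R) -> bool }.

Definition addop_ok (v : vocab) (s : addop v) : Prop :=
  {in ao_A1 s &, injective (@ao_g1 v s)} /\
  {in ao_A2 s &, injective (@ao_g2 v s)} /\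
  (forall i j, i \in ao_A1 s -> j \in ao_A2 s -> ao_g1 i != ao_g2 j) /\
  (forall t, (exists2 i, i \in ao_A1 s & ao_g1 i = t) \/
             (exists2 j, j \in ao_A2 s & ao_g2 j = t)).

Section Sum.
Variables (v : vocab) (s : addop v) (M1 M2 : kstruc v).
Local Notation k := (ao_k s). Local Notation k1 := (ao_k1 s).
Local Notation k2 := (ao_k2 s).
Local Notation c1 := (kc M1). Local Notation c2 := (kc M2).

Definition sum_ok : Prop :=
  kwf M1 /\ kwf M2 /\ size c1 = k1 /\ size c2 = k2 /\
  (forall x, x \in univ (kS M1) -> x \in univ (kS M2) -> x \in c1 /\ x \in c2) /\
  (forall i j : 'I_k1, (nth 0 c1 i == nth 0 c1 j) = ((i, j) \in ao_B1 s)) /\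
  (forall i j : 'I_k2, (nth 0 c2 i == nth 0 c2 j) = ((i, j) \in ao_B2 s)) /\
  (forall (i : 'I_k1) (j : 'I_k2), (nth 0 c1 i == nth 0 c2 j) = ((i, j) \in ao_B s)).

Definition sum_const (t : 'I_k) : nat :=
  if [pick i in ao_A1 s | ao_g1 i == t] is Some i then nth 0 c1 i
  else if [pick j in ao_A2 s | ao_g2 j == t] is Some j then nth 0 c2 j
  else 0.

Definition sum_univ : seq nat :=
  [seq x <- univ (kS M1) | x \notin c1] ++ [seq x <- univ (kS M2) | x \notin c2] ++
  [seq nth 0 c1 i | i : 'I_k1 in ao_A1 s] ++ [seq nth 0 c2 j | j : 'I_k2 in ao_A2 s].

Definition ptype_of (n : nat) (xs : seq nat) : ptype n k1 k2 :=
  let tval (t : 'I_(n + k1 + k2)) :=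
    if t < n then nth 0 xs t
    else if t < n + k1 then nth 0 c1 (t - n) else nth 0 c2 (t - n - k1) in
  [set a : patom (n + k1 + k2) | match a with
     | inl (inl tt') => tval tt'.1 == tval tt'.2
     | inl (inr t) => tval t \in univ (kS M1)
     | inr t => tval t \in univ (kS M2) end].

Definition qtype_of (M : struc v) (n : nat) (w : {set 'I_n}) (xs : seq nat)
  : qtype v n :=
  [set a : qatom v n | match a with
     | inl ij => [&& ij.1 \in w, ij.2 \in w & nth 0 xs ij.1 == nth 0 xs ij.2]
     | inr (existT R tu) =>
         all (fun i => i \in w) tu && holds M R (map (fun i : 'I_n => nth 0 xs i) tu)
     end].

Definition sum_rel (R : sym v) (xs : seq nat) : bool :=
  let w1 := [set i : 'I_(ar R) | nth 0 xs i \in univ (kS M1)] in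
  let w2 := [set i : 'I_(ar R) | nth 0 xs i \in univ (kS M2)] in
  ao_f w1 w2 (ptype_of (ar R) xs)
       (qtype_of (kS M1) w1 xs) (qtype_of (kS M2) w2 xs).

Definition ksum : kstruc v :=
  @KStruc v (@Struc v sum_univ sum_rel) (map sum_const (enum 'I_k)).
End Sum.

Inductive kclos (v : vocab) (nP : nat) (P : nat -> kstruc v)
          (nS : nat) (S : nat -> addop v) : kstruc v -> Prop :=
| kc_base i : i < nP -> kclos nP P nS S (P i)
| kc_iso M N : kclos nP P nS S M -> kiso M N -> kclos nP P nS S N
| kc_sum i M1 M2 : i < nS -> kclos nP P nS S M1 -> kclos nP P nS S M2 ->
    sum_ok (S i) M1 M2 -> kclos nP P nS S (ksum (S i) M1 M2).

Definition constructible (v : vocab) (mstar kstar : nat) (K : struc v -> Prop)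
  : Prop :=
  exists (aux : finType) (arx : aux -> nat),
    (forall a, arx a <= mstar) /\
    exists (nP : nat) (P : nat -> kstruc (ext v aux arx))
           (nS : nat) (S : nat -> addop (ext v aux arx)),
      (forall i, i < nP -> kwf (P i) /\ size (kc (P i)) <= kstar) /\
      (forall i, i < nS -> addop_ok (S i) /\
          [/\ ao_k (S i) <= kstar, ao_k1 (S i) <= kstar & ao_k2 (S i) <= kstar]) /\
      forall M, K M <-> exists N, kclos nP P nS S N /\ M = reduct (kS N).

From Stdlib Require Import ClassicalEpsilon.
From Pilot Require Import Defs.
From mathcomp Require Import all_boot.
Set Implicit Arguments. Unset Strict Implicit. Unset Printing Implicit Defensive.

(* Recolorings, modifications and their composites all act on a structure in the
   same way: each relation is recomputed from the quantifier-free type of its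
   argument tuple.  Such a qf-transform is a function from pairs (symbol, full qf
   type) to booleans, so there are only finitely many; they are closed under
   composition, and a transform applied to a disjoint union is an addition
   operation without constants.  Pushing all transforms down to the generators,
   the PW closure of [P] is therefore generated from the structures [T (P i)] by
   the constant-free additions [T (M1 ⊔ M2)], with [T] ranging over the finitely
   many transforms under which the PW closure is stable. *)

Section QfTransforms.
Variable v : vocab.

Definition same_struc (M N : struc v) :=
  univ M =i univ N /\ forall R xs, holds M R xs = holds N R xs.

Lemma same_struc_sym (M N : struc v) : same_struc M N -> same_struc N M.
Proof. by case=> eqU eqR; split=> [x|R xs]; rewrite ?eqU ?eqR. Qed.

Lemma same_struc_trans (M N O : struc v) :
  same_struc M N -> same_struc N O -> same_struc M O.
Proof. by case=> eqU eqR [eqU' eqR']; split=> [x|R xs]; rewrite ?eqU ?eqR ?eqU' ?eqR'. Qed.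

Lemma same_struc_iso (M N : struc v) : same_struc M N -> iso M N.
Proof.
case=> eqU eqR; exists id; split=> //; split=> [y|R xs _]; last by rewrite map_id.
by rewrite -eqU; split=> [My|[x Mx <-]]; first exists y.
Qed.

Lemma eq_qtype_of (M N : struc v) n (w : {set 'I_n}) xs :
  (forall R xs, holds M R xs = holds N R xs) -> qtype_of M w xs = qtype_of N w xs.
Proof. by move=> eqR; apply/setP => -[[i j]|[R tu]]; rewrite !inE ?eqR. Qed.

Definition qftrans := {ffun {R : sym v & qtype v (ar R)} -> bool}.

Definition qfapply (T : qftrans) (M : struc v) : struc v :=
  Struc (univ M) (fun R xs => T (existT _ R (qtype_of M [set: 'I_(ar R)] xs))).

Lemma holds_qfapply T (M : struc v) R xs : holds (qfapply T M) R xs =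
  [&& size xs == ar R, all (fun x => x \in univ M) xs &
      T (existT _ R (qtype_of M [set: 'I_(ar R)] xs))].
Proof. by []. Qed.

Lemma same_struc_qfapply (T : qftrans) (M N : struc v) : univ N = univ M ->
  (forall R xs, size xs = ar R -> all (fun x => x \in univ M) xs ->
     T (existT _ R (qtype_of M [set: 'I_(ar R)] xs)) = Defs.rel N R xs) ->
  same_struc (qfapply T M) N.
Proof.
move=> eqU eqT; split=> [x|R xs]; first by rewrite eqU.
rewrite /holds /= eqU; case: eqP => //= sz; case Mxs: (all _ xs) => //=; exact: eqT.
Qed.

Lemma qfapply_same T (M N : struc v) :
  same_struc M N -> same_struc (qfapply T M) (qfapply T N).
Proof.
case=> eqU eqR; split=> // R xs; rewrite !holds_qfapply (eq_qtype_of _ _ eqR).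
by rewrite (eq_all eqU).
Qed.

Lemma qfapply_iso T (M N : struc v) : iso M N -> iso (qfapply T M) (qfapply T N).
Proof.
case=> f [f_inj [f_onto f_holds]]; exists f; split=> //; split=> // R xs Mxs.
have Mnth (i : nat) : i < size xs -> nth 0 xs i \in univ M.
  by move=> lt_i; apply: (allP Mxs); apply: mem_nth.
rewrite !holds_qfapply size_map Mxs.
have -> : all (fun y => y \in univ N) (map f xs).
  by apply/allP => _ /mapP [x Mx ->]; apply/f_onto; exists x => //; apply: (allP Mxs).
case: eqP => //= sz; congr (T (existT _ R _)); apply/setP => -[[i j]|[S tu]]; rewrite !inE /=.
  by rewrite !(nth_map 0) ?sz // (inj_in_eq f_inj) ?Mnth ?sz.
have -> : map (fun i : 'I_(ar R) => nth 0 (map f xs) i) tu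
       = map f (map (fun i : 'I_(ar R) => nth 0 xs i) tu).
  by rewrite -map_comp; apply: eq_map => i /=; rewrite (nth_map 0) ?sz.
by rewrite f_holds //; apply/allP => _ /mapP [i _ ->]; rewrite Mnth ?sz.
Qed.

Definition qtype_holds n (q : qtype v n) (R : sym v) (l : seq nat) : bool :=
  [exists tu : (ar R).-tuple 'I_n, (map val tu == l) && (inr (existT _ R tu) \in q)].

Definition qtype_eq n (q : qtype v n) (i j : nat) : bool :=
  [exists p : 'I_n * 'I_n, [&& val p.1 == i, val p.2 == j & inl p \in q]].

Fixpoint qtype_sat n (q : qtype v n) (B : qf v) : bool :=
  match B with
  | QFalse => false
  | QAtom R l => qtype_holds q R l
  | QEq i j => qtype_eq q i j
  | QNeg B1 => ~~ qtype_sat q B1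
  | QAnd B1 B2 => qtype_sat q B1 && qtype_sat q B2
  end.

Lemma map_val_pmap_insub n (l : seq nat) : all (fun i => i < n) l ->
  map val (pmap insub l : seq 'I_n) = l.
Proof.
move=> lt_l; rewrite (pmap_filter (@insubK _ _ _)); apply/all_filterP.
by apply: sub_all lt_l => i; rewrite isSome_insub.
Qed.

Lemma qtype_holdsE (M : struc v) n xs R l :
  qtype_holds (qtype_of M [set: 'I_n] xs) R l =
  [&& size l == ar R, all (fun i => i < n) l & holds M R (map (nth 0 xs) l)].
Proof.
apply/existsP/and3P => [[tu /andP [/eqP <-]]|[/eqP sz lt_l Rl]].
  rewrite inE /= size_map size_tuple => /andP [_ Rtu]; split=> //; last by rewrite -map_comp.
  by apply/allP => _ /mapP [i _ ->].
have sz_s : size (pmap insub l : seq 'I_n) == ar R.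
  by rewrite -sz -{2}(map_val_pmap_insub lt_l) size_map.
exists (Tuple sz_s); rewrite /= map_val_pmap_insub // eqxx inE /=.
apply/andP; split; first by apply/allP => i; rewrite in_setT.
by move: Rl; rewrite -{1}(map_val_pmap_insub lt_l) -map_comp.
Qed.

Lemma qtype_eqE (M : struc v) n xs i j :
  qtype_eq (qtype_of M [set: 'I_n] xs) i j = [&& i < n, j < n & nth 0 xs i == nth 0 xs j].
Proof.
apply/existsP/and3P => [[[a b] /and3P [/eqP <- /eqP <-]]|[lt_i lt_j eq_ij]].
  by rewrite inE /= !in_setT /= !ltn_ord.
by exists (Ordinal lt_i, Ordinal lt_j); rewrite /= !eqxx inE /= !in_setT.
Qed.

Lemma qtype_satE (M : struc v) n xs B : qf_scoped n B ->
  qtype_sat (qtype_of M [set: 'I_n] xs) B = qf_eval M (nth 0 xs) B.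
Proof.
elim: B => [|R l|i j|B IH|B1 IH1 B2 IH2] //=.
- move=> lt_l; rewrite qtype_holdsE lt_l /holds size_map.
  by case: (size l == ar R); rewrite ?andbF.
- by case/andP=> lt_i lt_j; rewrite qtype_eqE lt_i lt_j.
- by move/IH ->.
- by case/andP=> /IH1 -> /IH2 ->.
Qed.

Lemma qtype_holds_iota (M : struc v) n xs R :
  size xs = n -> ar R = n -> all (fun x => x \in univ M) xs ->
  qtype_holds (qtype_of M [set: 'I_n] xs) R (iota 0 n) = Defs.rel M R xs.
Proof.
move=> sz arR Mxs; rewrite qtype_holdsE size_iota arR eqxx -sz map_nth_iota0 // take_size.
have -> : all (fun i => i < size xs) (iota 0 (size xs)) by apply/allP => i; rewrite mem_iota.
by rewrite /holds sz arR eqxx [all _ _]Mxs.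
Qed.

Definition qftrans_id : qftrans :=
  [ffun p => qtype_holds (tagged p) (tag p) (iota 0 (ar (tag p)))].

Lemma qfapply_id (M : struc v) : same_struc (qfapply qftrans_id M) M.
Proof.
by apply: same_struc_qfapply => // R xs sz Mxs; rewrite ffunE qtype_holds_iota.
Qed.

Definition qtype_map n (R : sym v) (tu : (ar R).-tuple 'I_n) (q : qtype v n) : qtype v (ar R) :=
  [set a : qatom v (ar R) | match a with
     | inl ij => inl (tnth tu ij.1, tnth tu ij.2) \in q
     | inr (existT R' tu') => inr (existT _ R' [tuple of map (tnth tu) tu']) \in q
     end].

Lemma all_in_setT (T : finType) (s : seq T) : all (fun i => i \in [set: T]) s.
Proof. by apply/allP => x; rewrite in_setT. Qed.

Lemma qtype_map_of (M : struc v) n (R : sym v) (tu : (ar R).-tuple 'I_n) xs :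
  qtype_map tu (qtype_of M [set: 'I_n] xs) =
  qtype_of M [set: 'I_(ar R)] (map (fun i : 'I_n => nth 0 xs i) tu).
Proof.
have nth_tu (i : 'I_(ar R)) :
    nth 0 (map (fun j : 'I_n => nth 0 xs j) tu) i = nth 0 xs (tnth tu i).
  by rewrite -[map _ _]/(val [tuple of map (fun j : 'I_n => nth 0 xs j) tu]) -tnth_nth tnth_map.
apply/setP => -[[i j]|[R' tu']]; rewrite !inE /= ?in_setT /= ?nth_tu //.
by rewrite !all_in_setT -map_comp; congr (holds M R' _); apply: eq_map => i /=; rewrite nth_tu.
Qed.

Definition qtype_apply (T0 : qftrans) n (q : qtype v n) : qtype v n :=
  [set a : qatom v n | match a with
     | inl ij => inl ij \in q
     | inr (existT R tu) => T0 (existT _ R (qtype_map tu q))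
     end].

Lemma qtype_of_qfapply T0 (M : struc v) n xs :
  size xs = n -> all (fun x => x \in univ M) xs ->
  qtype_of (qfapply T0 M) [set: 'I_n] xs = qtype_apply T0 (qtype_of M [set: 'I_n] xs).
Proof.
move=> sz Mxs; apply/setP => -[[i j]|[R tu]]; rewrite !inE /= ?in_setT //=.
rewrite all_in_setT holds_qfapply size_map size_tuple eqxx qtype_map_of /=.
suff -> : all (fun x => x \in univ M) (map (fun i : 'I_n => nth 0 xs i) tu) by [].
by apply/allP => _ /mapP [i _ ->]; apply: (allP Mxs); rewrite mem_nth ?sz.
Qed.

Definition qftrans_comp (T T0 : qftrans) : qftrans :=
  [ffun p => T (existT _ (tag p) (qtype_apply T0 (tagged p)))].

Lemma qfapply_comp T T0 (M : struc v) :
  same_struc (qfapply (qftrans_comp T T0) M) (qfapply T (qfapply T0 M)).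
Proof.
split=> // R xs; rewrite !holds_qfapply ffunE /=.
by case: eqP => //= sz; case Mxs: (all _ xs) => //=; rewrite qtype_of_qfapply.
Qed.

(* Without constants, the terms of [ptype n 0 0] are just the [n] variables. *)
Definition qtype_union n (p : ptype n 0 0) (q1 q2 : qtype v n) : qtype v n :=
  [set a : qatom v n | match a with
     | inl ij => inl (inl (lshift 0 (lshift 0 ij.1), lshift 0 (lshift 0 ij.2))) \in p
     | inr b => (inr b \in q1) || (inr b \in q2)
     end].

Definition union_addop (T : qftrans) : addop v :=
  @AddOp v 0 0 0 set0 set0 id id set0 set0 set0
    (fun R _ _ p q1 q2 => T (existT _ R (qtype_union p q1 q2))).

Lemma union_addop_ok T : addop_ok (union_addop T).
Proof. by do 3?split; case. Qed.

Lemma sum_ok_unionP T (M1 M2 : kstruc v) :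
  sum_ok (union_addop T) M1 M2 <->
  [/\ kc M1 = [::], kc M2 = [::] & forall x, x \in univ (kS M1) -> x \notin univ (kS M2)].
Proof.
split=> [[_ [_ [/size0nil c1 [/size0nil c2 [disj _]]]]]|[c1 c2 disj]].
  by split=> // x M1x; apply/negP => /(disj x M1x) []; rewrite c1 in_nil.
rewrite /sum_ok /kwf c1 c2; do 4!split=> //.
split; last by do 2?split; case.
by move=> x M1x M2x; move: (disj x M1x); rewrite M2x.
Qed.

Lemma kc_ksum_union T (M1 M2 : kstruc v) : kc (ksum (union_addop T) M1 M2) = [::].
Proof. by rewrite /= enum_ord0. Qed.

Lemma ksum_union T (M1 M2 : kstruc v) : sum_ok (union_addop T) M1 M2 ->
  same_struc (kS (ksum (union_addop T) M1 M2)) (qfapply T (disj_union (kS M1) (kS M2))).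
Proof.
case/sum_ok_unionP=> c1 c2 _.
have eqU x : (x \in sum_univ (union_addop T) M1 M2) = (x \in univ (kS M1) ++ univ (kS M2)).
  have no_const (A : {set 'I_0}) : (x \in [seq nth 0 [::] i | i : 'I_0 in A]) = false.
    by apply/negbTE/negP => /imageP [[]].
  by rewrite /sum_univ c1 c2 !mem_cat !mem_filter !no_const !orbF.
split=> // R xs; rewrite holds_qfapply /holds /= (eq_all eqU).
case: eqP => //= sz; case Uxs: (all _ xs) => //=.
rewrite /sum_rel; congr (T (existT _ R _)).
apply/setP => -[[i j]|[S tu]]; rewrite !inE /= ?ltn_ord // all_in_setT /=.
set ys := map _ tu.
have in_w (N : struc v) :
    all (fun i => i \in [set i : 'I_(ar R) | nth 0 xs i \in univ N]) tu =
    all (fun y => y \in univ N) ys.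
  by rewrite all_map; apply: eq_all => i; rewrite inE.
rewrite !in_w /holds /=.
have -> : all (fun y => y \in univ (kS M1) ++ univ (kS M2)) ys.
  by apply/allP => _ /mapP [i _ ->]; apply: (allP Uxs); rewrite mem_nth ?sz.
by rewrite /holds; case: (size ys == _); case: (all _ ys); case: (all _ ys); rewrite ?andbF.
Qed.

End QfTransforms.

Definition kstruc0 (v : vocab) (M : struc v) : kstruc v := KStruc M [::].

Lemma kiso_iso (v : vocab) (M N : kstruc v) : kiso M N -> iso (kS M) (kS N).
Proof. by case=> f [f_inj [f_onto [f_holds _]]]; exists f. Qed.

Lemma iso_kiso0 (v : vocab) (N : kstruc v) (M : struc v) :
  kc N = [::] -> iso (kS N) M -> kiso N (kstruc0 M).
Proof. by move=> cN [f [f_inj [f_onto f_holds]]]; exists f; do 3!split=> //; rewrite cN. Qed.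

Section PWOperations.
Variables (tau : vocab) (aux : finType) (arx : aux -> nat).
Local Notation tp := (ext tau aux arx).

Definition qftrans_recolor (i j : aux) : qftrans tp :=
  [ffun p : {R : sym tp & qtype tp (ar R)} => let: existT R q := p in
    if R == inr j then
      qtype_holds q (inr i) (iota 0 (ar R)) || qtype_holds q (inr j) (iota 0 (ar R))
    else if R == inr i then false
    else qtype_holds q R (iota 0 (ar R))].

Lemma qfapply_recolor (M : struc tp) i j : arx i = 1 -> arx j = 1 ->
  same_struc (qfapply (qftrans_recolor i j) M) (recolor M i j).
Proof.
move=> ari arj; apply: same_struc_qfapply => // R xs sz Mxs; rewrite ffunE /=.
case: eqP => [eRj|_]; last by case: eqP => // _; rewrite qtype_holds_iota.
subst R; have ar_ij : ar (inr i : sym tp) = arx j by rewrite /= ari arj.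
by rewrite !qtype_holds_iota.
Qed.

Definition qftrans_modify (R : sym tp) (B : qf tp) : qftrans tp :=
  [ffun p => if tag p == R then qtype_sat (tagged p) B
             else qtype_holds (tagged p) (tag p) (iota 0 (ar (tag p)))].

Lemma qfapply_modify (M : struc tp) R B : qf_scoped (ar R) B ->
  same_struc (qfapply (qftrans_modify R B) M) (modify M R B).
Proof.
move=> scB; apply: same_struc_qfapply => // S xs sz Mxs; rewrite ffunE /=.
by case: eqP => [->|_]; rewrite ?qtype_satE ?qtype_holds_iota.
Qed.

End PWOperations.
Arguments qftrans_recolor {tau aux arx}.

Section Closure.
Variables (tau : vocab) (aux : finType) (arx : aux -> nat).
Variables (nP : nat) (P : nat -> struc (ext tau aux arx)).
Local Notation tp := (ext tau aux arx).

Lemma pw_clos_same M N : pw_clos nP P M -> same_struc M N -> pw_clos nP P N.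
Proof. by move=> pwM /same_struc_iso; apply: pw_iso. Qed.

Definition pw_stable (T : qftrans tp) :=
  forall M, pw_clos nP P M -> pw_clos nP P (qfapply T M).

Lemma pw_stable_id : pw_stable (qftrans_id tp).
Proof. by move=> M pwM; apply: pw_clos_same pwM (same_struc_sym (qfapply_id M)). Qed.

Lemma pw_stable_comp T T0 : pw_stable T -> pw_stable T0 -> pw_stable (qftrans_comp T T0).
Proof.
by move=> sT sT0 M /sT0 /sT pwM; apply: pw_clos_same pwM (same_struc_sym (qfapply_comp _ _ _)).
Qed.

Lemma pw_stable_recolor i j : arx i = 1 -> arx j = 1 -> pw_stable (qftrans_recolor i j).
Proof.
move=> ari arj M pwM; apply: pw_clos_same (pw_recolor ari arj pwM) _.
exact/same_struc_sym/qfapply_recolor.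
Qed.

Lemma pw_stable_modify R B : qf_scoped (ar R) B -> pw_stable (qftrans_modify R B).
Proof.
move=> scB M pwM; apply: pw_clos_same (pw_modify scB pwM) _.
exact/same_struc_sym/qfapply_modify.
Qed.

Definition stable_trans : seq (qftrans tp) :=
  [seq T <- enum (qftrans tp) | excluded_middle_informative (pw_stable T)].

Definition base_pairs : seq (nat * qftrans tp) :=
  [seq (i, T) | i <- iota 0 nP, T <- stable_trans].

Definition kbase (j : nat) : kstruc tp :=
  let: (i, T) := nth (0, qftrans_id tp) base_pairs j in kstruc0 (qfapply T (P i)).

Definition kop (j : nat) : addop tp := union_addop (nth (qftrans_id tp) stable_trans j).

Local Notation kclosed := (kclos (size base_pairs) kbase (size stable_trans) kop).

Lemma mem_stable_trans T : T \in stable_trans <-> pw_stable T.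
Proof. by rewrite mem_filter mem_enum andbT; case: excluded_middle_informative. Qed.

Lemma mem_base_pairs i T : ((i, T) \in base_pairs) = (i < nP) && (T \in stable_trans).
Proof.
apply/allpairsP/andP => [[[a b] [ia Tb [-> ->]]]|[lt_i sT]]; first by rewrite mem_iota in ia.
by exists (i, T); rewrite mem_iota.
Qed.

Lemma pw_stable_kop j : j < size stable_trans -> pw_stable (nth (qftrans_id tp) stable_trans j).
Proof. by move=> lt_j; apply/mem_stable_trans/mem_nth. Qed.

Lemma kbaseP j : j < size base_pairs ->
  exists i T, [/\ i < nP, pw_stable T & kbase j = kstruc0 (qfapply T (P i))].
Proof.
move=> lt_j; have := mem_nth (0, qftrans_id tp) lt_j; rewrite /kbase.
by case: nth => i T; rewrite mem_base_pairs => /andP [lt_i /mem_stable_trans sT]; exists i, T.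
Qed.

Lemma kclos_same M N : kclosed (kstruc0 M) -> same_struc M N -> kclosed (kstruc0 N).
Proof. by move=> kM /same_struc_iso isoMN; apply: kc_iso kM _; apply: iso_kiso0. Qed.

Lemma kclos_base T i : i < nP -> pw_stable T -> kclosed (kstruc0 (qfapply T (P i))).
Proof.
move=> lt_i /mem_stable_trans sT.
have lt_j : index (i, T) base_pairs < size base_pairs by rewrite index_mem mem_base_pairs lt_i.
have := kc_base kbase (size stable_trans) kop lt_j.
by rewrite /kbase nth_index ?mem_base_pairs ?lt_i.
Qed.

Lemma kclos_pw N : kclosed N -> pw_clos nP P (kS N) /\ kc N = [::].
Proof.
elim=> [j /kbaseP [i [T [lt_i sT ->]]]|M N' _ [pwM cM] isoMN|j M1 M2 lt_j _ [pw1 _] _ [pw2 _] ok].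
- by split=> //; apply/sT/pw_base.
- split; first exact: pw_iso pwM (kiso_iso isoMN).
  by case: isoMN => f [_ [_ [_ <-]]]; rewrite cM.
- split; last exact: kc_ksum_union.
  have /sum_ok_unionP [_ _ disj] := ok.
  apply: pw_clos_same (pw_stable_kop lt_j (pw_union pw1 pw2 disj)) _.
  exact/same_struc_sym/ksum_union.
Qed.

Lemma kclos_union T M1 M2 : pw_stable T -> kclosed M1 -> kclosed M2 ->
  (forall x, x \in univ (kS M1) -> x \notin univ (kS M2)) ->
  kclosed (kstruc0 (qfapply T (disj_union (kS M1) (kS M2)))).
Proof.
move=> /mem_stable_trans sT kM1 kM2 disj.
have lt_j : index T stable_trans < size stable_trans by rewrite index_mem.
have ok : sum_ok (kop (index T stable_trans)) M1 M2.
  by apply/sum_ok_unionP; split=> //; [apply: (kclos_pw kM1).2 | apply: (kclos_pw kM2).2].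
apply: kc_iso (kc_sum lt_j kM1 kM2 ok) _; apply: iso_kiso0; first exact: kc_ksum_union.
by apply: same_struc_iso; move: ok; rewrite /kop nth_index //; apply: ksum_union.
Qed.

Lemma kclos_qfapply N T : kclosed N -> pw_stable T -> kclosed (kstruc0 (qfapply T (kS N))).
Proof.
move=> kN; elim: kN T => [j /kbaseP [i [T0 [lt_i sT0 ->]]]|M N' _ IH isoMN|
                          j M1 M2 lt_j kM1 _ kM2 _ ok] T sT.
- exact: kclos_same (kclos_base lt_i (pw_stable_comp sT sT0)) (qfapply_comp _ _ _).
- by apply: kc_iso (IH T sT) _; apply/iso_kiso0/qfapply_iso/kiso_iso.
- have /sum_ok_unionP [_ _ disj] := ok.
  apply: kclos_same (kclos_union (pw_stable_comp sT (pw_stable_kop lt_j)) kM1 kM2 disj) _.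
  apply: same_struc_trans (qfapply_comp _ _ _) _.
  exact/qfapply_same/same_struc_sym/ksum_union.
Qed.

Lemma pw_kclos M : pw_clos nP P M -> kclosed (kstruc0 M).
Proof.
elim=> [i lt_i|M1 M2 _ IH iso12|M1 M2 _ k1 _ k2 disj|M1 i j ari arj _ IH|M1 R B scB _ IH].
- exact: kclos_same (kclos_base lt_i pw_stable_id) (qfapply_id _).
- by apply: kc_iso IH _; apply: iso_kiso0.
- exact: kclos_same (kclos_union pw_stable_id k1 k2 disj) (qfapply_id _).
- exact: kclos_same (kclos_qfapply IH (pw_stable_recolor ari arj)) (qfapply_recolor _ ari arj).
- exact: kclos_same (kclos_qfapply IH (pw_stable_modify scB)) (qfapply_modify _ scB).
Qed.

End Closure.

Theorem mainTheorem4 (tau : vocab) (m k : nat) (K : struc tau -> Prop) :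
  nice tau -> pw_class m k K -> constructible m 0 K.
Proof.
move=> _ [aux [arx [_ [ar_le_m [nP [P defK]]]]]].
exists aux, arx; split=> //.
exists (size (base_pairs nP P)), (kbase nP P), (size (stable_trans nP P)), (kop nP P).
split; first by move=> j _; rewrite /kbase; case: nth.
split; first by move=> j _; split; [exact: union_addop_ok|].
move=> M; rewrite defK; split=> -[N [pwN ->]].
- by exists (kstruc0 N); split; first exact: pw_kclos.
- by exists (kS N); split; first exact: (kclos_pw pwN).1.
Qed.
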